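(* Let $\rho\in(0,1)$ and $c_A,c_K>0$. There is a constant $c_1>0$, depending only on $A,B,Q,R,\rho,c_A,c_K$ and the dimensions, such that for any $K,K'\in\mathbb{R}^{k\times d}$ with $\|K\|,\|K'\|\le c_K$, $\|A-BK\|,\|A-BK'\|\le c_A$ and $\rho(A-BK),\rho(A-BK')\le\rho$, $$\|\theta_K-\theta_{K'}\|_F\le c_1\|K-K'\|_F.$$
   Context: $A\in\mathbb{R}^{d\times d}$, $B\in\mathbb{R}^{d\times k}$, $Q\in\mathbb{R}^{d\times d}$, $R\in\mathbb{R}^{k\times k}$ symmetric positive definite. $\rho(\cdot)$ is the spectral radius, $\|\cdot\|$ the operator norm. For $\rho(A-BK)<1$, $P_K$ is the solution of $P_K=Q+K^\top RK+(A-BK)^\top P_K(A-BK)$ and $$\theta_K=\begin{bmatrix}Q+A^\top P_KA & A^\top P_KB\\ B^\top P_KA & R+B^\top P_KB\end{bmatrix}.$$ *)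

From HB Require Import structures.
From mathcomp Require Import all_boot all_order all_algebra.
From mathcomp Require Import complex.
From mathcomp Require Import boolp classical_sets reals.
Set Implicit Arguments. Unset Strict Implicit. Unset Printing Implicit Defensive.
Import Order.TTheory GRing.Theory Num.Theory.
Local Open Scope ring_scope.
Local Open Scope classical_set_scope.

Definition vnorm (F : realType) (n : nat) (x : 'cV[F]_n) : F :=
  Num.sqrt (\sum_(i < n) x i 0 ^+ 2).

Definition opnorm (F : realType) (m n : nat) (M : 'M[F]_(m, n)) : F :=
  sup [set vnorm (M *m x) | x in [set x : 'cV[F]_n | vnorm x <= 1]].

Definition frob (F : realType) (m n : nat) (M : 'M[F]_(m, n)) : F :=
  Num.sqrt (\sum_(i < m) \sum_(j < n) M i j ^+ 2).

Definition spectral_radius (F : realType) (n : nat) (M : 'M[F]_n) : F :=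
  sup [set Normc.normc l | l in
        [set l : F[i] | eigenvalue (map_mx (fun a : F => (a%:C)%C) M) l]].

Definition posdef (F : realType) (n : nat) (M : 'M[F]_n) : Prop :=
  M^T = M /\ forall x : 'cV[F]_n, x != 0 -> 0 < (x^T *m M *m x) 0 0.

(* theta_K built from P = P_K *)
Definition theta (F : realType) (d k : nat) (A : 'M[F]_d) (B : 'M[F]_(d, k))
  (Q : 'M[F]_d) (Rm : 'M[F]_k) (P : 'M[F]_d) : 'M[F]_(d + k) :=
  block_mx (Q + A^T *m P *m A) (A^T *m P *m B)
           (B^T *m P *m A) (Rm + B^T *m P *m B).

Definition lyap_sol (F : realType) (d k : nat) (A : 'M[F]_d) (B : 'M[F]_(d, k))
  (Q : 'M[F]_d) (Rm : 'M[F]_k) (K : 'M[F]_(k, d)) (P : 'M[F]_d) : Prop :=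
  P = Q + K^T *m Rm *m K + (A - B *m K)^T *m P *m (A - B *m K).

(* Write L = A - B K and L' = A - B K'.  Subtracting the two Lyapunov equations
   gives P - P' = L^T (P - P') L + E, where E is bilinear in K - K' and
   L - L' = - B (K - K'), with the other factors bounded by cK, cA and a bound on
   P'.  A solution X of X = L^T X L + E is the sum of the (L^j)^T E L^j, and the
   spectral radius bound makes the entries of L^j decay like ((1 + rho) / 2)^j
   times a constant depending only on d, cA and rho: expand L^j on the products
   of the factors L - z over the eigenvalues z, which vanish after d factors by
   Cayley-Hamilton.  Hence P' and then P - P' are bounded entrywise by constant
   multiples of |K - K'|, and theta_K - theta_K' = [A B]^T (P - P') [A B]. *)

From HB Require Import structures.
From mathcomp Require Import all_boot all_order all_algebra.
From mathcomp Require Import complex.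
From mathcomp Require Import boolp classical_sets reals.
From mathcomp Require Import ring lra.
Import Order.TTheory GRing.Theory Num.Theory.
Local Open Scope ring_scope.
Set Implicit Arguments. Unset Strict Implicit. Unset Printing Implicit Defensive.

Definition mxbound (R : numDomainType) m n (X : 'M[R]_(m, n)) (b : R) :=
  forall i j, `|X i j| <= b.

Section EntryBounds.
Variable R : numDomainType.
Implicit Types a b : R.

Lemma mxboundW m n (X : 'M[R]_(m, n)) a b : a <= b -> mxbound X a -> mxbound X b.
Proof. by move=> ab hX i j; apply: le_trans ab. Qed.

Lemma mxboundT m n (X : 'M[R]_(m, n)) b : mxbound X b -> mxbound X^T b.
Proof. by move=> hX i j; rewrite mxE. Qed.

Lemma mxboundN m n (X : 'M[R]_(m, n)) b : mxbound X b -> mxbound (- X) b.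
Proof. by move=> hX i j; rewrite mxE normrN. Qed.

Lemma mxboundD m n (X Y : 'M[R]_(m, n)) a b :
  mxbound X a -> mxbound Y b -> mxbound (X + Y) (a + b).
Proof.
by move=> hX hY i j; rewrite mxE; apply: le_trans (ler_normD _ _) (lerD _ _).
Qed.

Lemma mxboundM m n p (X : 'M[R]_(m, n)) (Y : 'M[R]_(n, p)) a b :
  mxbound X a -> mxbound Y b -> mxbound (X *m Y) (n%:R * (a * b)).
Proof.
move=> hX hY i j; rewrite mxE; apply: le_trans (ler_norm_sum _ _ _) _.
rewrite mulr_natl -[X in _ *+ X]card_ord -sumr_const; apply: ler_sum => l _.
by rewrite normrM ler_pM.
Qed.

End EntryBounds.

Section NormBounds.
Variable F : realType.

Lemma frob_ge0 m n (X : 'M[F]_(m, n)) : 0 <= frob X.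
Proof. exact: sqrtr_ge0. Qed.

Lemma mxbound_frob m n (X : 'M[F]_(m, n)) : mxbound X (frob X).
Proof.
move=> i j; rewrite /frob -sqrtr_sqr; apply: ler_wsqrtr.
rewrite (bigD1 i) //= (bigD1 j) //= -addrA lerDl.
by apply: addr_ge0; do ![apply: sumr_ge0 => *]; apply: sqr_ge0.
Qed.

Lemma frob_le_mxbound m n (X : 'M[F]_(m, n)) (b : F) :
  0 <= b -> mxbound X b -> frob X <= (m * n)%:R * b.
Proof.
move=> b0 hX; rewrite -[_ * b]ger0_norm ?mulr_ge0 // -sqrtr_sqr.
apply: ler_wsqrtr; apply: le_trans (_ : (m * n)%:R * b ^+ 2 <= _).
  have -> : (m * n)%:R * b ^+ 2 = \sum_(i < m) \sum_(j < n) b ^+ 2.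
    by rewrite mulr_natl mulnC mulrnA !sumr_const !card_ord.
  apply: ler_sum => i _; apply: ler_sum => j _.
  by rewrite -real_normK ?num_real // lerXn2r ?nnegrE.
rewrite exprMn ler_wpM2r ?sqr_ge0 //; case: (m * n)%N => [|p].
  by rewrite expr0n.
by rewrite -natrX ler_nat expnS leq_pmulr.
Qed.

Lemma vnorm_frob n (x : 'cV[F]_n) : vnorm x = frob x.
Proof.
by rewrite /vnorm /frob; congr Num.sqrt; apply: eq_bigr => i _; rewrite big_ord1.
Qed.

Lemma mxbound_opnorm m n (M : 'M[F]_(m, n)) : mxbound M (opnorm M).
Proof.
move=> i j.
have bounded : has_ubound
    [set vnorm (M *m x) | x in [set x : 'cV[F]_n | vnorm x <= 1]].
  exists ((m * 1)%:R * (n%:R * (frob M * 1))) => _ [x /= x1 <-].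
  rewrite vnorm_frob; apply: frob_le_mxbound.
    by rewrite !mulr_ge0 ?sqrtr_ge0.
  apply: mxboundM (@mxbound_frob _ _ M) (mxboundW x1 _).
  by rewrite vnorm_frob; apply: mxbound_frob.
set e := delta_mx j (0 : 'I_1) : 'cV[F]_n.
have Me : (M *m e) i 0 = M i j.
  rewrite mxE (bigD1 j) //= !mxE !eqxx mulr1 big1 ?addr0 // => l /negbTE lj.
  by rewrite !mxE lj mulr0.
have e1 : vnorm e <= 1.
  rewrite /vnorm (bigD1 j) //= big1 ?mxE ?eqxx ?expr1n ?addr0 ?sqrtr1 //.
  by move=> l /negbTE lj; rewrite mxE lj expr0n.
rewrite -Me; apply: le_trans (mxbound_frob _ i 0) _; rewrite -vnorm_frob.
by apply: (ub_le_sup bounded); exists e.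
Qed.

End NormBounds.

Section AnnihilatedPowers.
Variables (R : numFieldType) (n : nat) (L : 'M[R]_n) (s : seq R) (rho r a : R).
Hypotheses (size_s : size s = n) (prod_s : \prod_(z <- s) (L - z%:M) = 0)
  (s_bound : forall z, z \in s -> `|z| <= rho) (rho_ge0 : 0 <= rho)
  (rho_lt_r : rho < r) (a_ge0 : 0 <= a) (L_bound : mxbound L a).

Let eta := (r - rho)^-1.
Let D := n%:R * (a + rho).
Let M k := \prod_(z <- take k s) (L - z%:M).

Let nth_bound k : `|nth 0 s k| <= rho.
Proof.
case: (ltnP k (size s)) => hk; first by apply/s_bound/mem_nth.
by rewrite nth_default ?normr0.
Qed.

Let M_oversize k : (n <= k)%N -> M k = 0.
Proof. by move=> nk; rewrite /M take_oversize ?size_s. Qed.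

Let M_succ k : (k < n)%N -> M k.+1 = M k * (L - (nth 0 s k)%:M).
Proof. by move=> kn; rewrite /M (take_nth 0) ?size_s // big_rcons. Qed.

Let L_mul_M k : L * M k = M k.+1 + nth 0 s k *: M k.
Proof.
case: (ltnP k n) => [kn|nk]; last by rewrite !M_oversize ?mulr0 ?scaler0 ?addr0 // leqW.
have -> : L * M k = M k * L.
  by apply: commr_prod => z _; rewrite /GRing.comm mulrBr mulrBl -!mulmxE scalar_mxC.
by rewrite M_succ // mulrBr -!mulmxE scalar_mxC mul_scalar_mx subrK.
Qed.

Let M_bound k : mxbound (M k) (D ^+ k).
Proof.
have D_ge0 : 0 <= D by rewrite mulr_ge0 ?ler0n ?addr_ge0.
elim: k => [|k IH] i j.
  by rewrite /M take0 big_nil mxE; case: (i == j); rewrite ?normr1 ?normr0.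
case: (ltnP k n) => [kn|nk]; last by rewrite M_oversize 1?leqW // mxE normr0 exprn_ge0.
have -> : D ^+ k.+1 = n%:R * (D ^+ k * (a + rho)) by rewrite exprSr /D; ring.
rewrite M_succ // -mulmxE; apply: mxboundM => // i' j'.
rewrite !mxE; apply: le_trans (ler_normB _ _) (lerD _ _) => //.
by case: (i' == j'); rewrite ?mulr1n ?mulr0n ?normr0.
Qed.

Let r_eta : rho * eta + 1 = r * eta.
Proof. by rewrite /eta; field; rewrite subr_eq0 gt_eqF. Qed.

(* Powers of [L] are expanded on the basis [M k]; multiplying by [L] shifts
   [M k] to [M k.+1 + z_k M k], whence the coefficient bounds. *)
Let pow_expansion m : exists c : nat -> R,
  L ^+ m = \sum_(k < n.+1) c k *: M k /\ forall k, `|c k| <= eta ^+ k * r ^+ m.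
Proof.
have eta_ge0 : 0 <= eta by rewrite invr_ge0 subr_ge0 ltW.
have r_ge0 : 0 <= r by rewrite (le_trans rho_ge0) ?ltW.
elim: m => [|m [c [Lm c_bound]]].
  exists (fun k => (k == 0)%N%:R); split.
    rewrite big_ord_recl /= scale1r big1 ?addr0 => [|i _]; last by rewrite scale0r.
    by rewrite expr0 /M take0 big_nil.
  by case=> [|k]; rewrite ?expr0 ?mulr1 ?normr1 ?normr0 ?exprn_ge0.
exists (fun k => nth 0 s k * c k + (if k is k'.+1 then c k' else 0)); split.
  rewrite exprS Lm mulr_sumr.
  under eq_bigr do rewrite -mulmxE -scalemxAr mulmxE L_mul_M scalerDr scalerA mulrC.
  under [RHS]eq_bigr do rewrite scalerDl.
  rewrite !big_split /= addrC; congr (_ + _).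
  rewrite big_ord_recr /= M_oversize // scaler0 addr0.
  by rewrite [RHS]big_ord_recl /= scale0r add0r.
move=> k; apply: le_trans (ler_normD _ _) _; rewrite normrM.
have zc : `|nth 0 s k| * `|c k| <= rho * (eta ^+ k * r ^+ m).
  by apply: ler_pM; rewrite ?nth_bound.
case: k zc => [|k] zc.
  rewrite normr0 addr0 exprS; apply: (le_trans zc).
  by rewrite !expr0 !mul1r ler_wpM2r ?exprn_ge0 // ltW.
apply: le_trans (lerD zc (c_bound k)) _.
have -> : rho * (eta ^+ k.+1 * r ^+ m) + eta ^+ k * r ^+ m
    = (rho * eta + 1) * (eta ^+ k * r ^+ m) by rewrite exprS; ring.
rewrite r_eta [X in _ <= X](_ : _ = r * eta * (eta ^+ k * r ^+ m)) //.
by rewrite !exprS; ring.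
Qed.

Lemma annihilated_pow_bound m :
  mxbound (L ^+ m) (r ^+ m * \sum_(k < n.+1) (eta * D) ^+ k).
Proof.
move=> i j; have [c [-> c_bound]] := pow_expansion m.
rewrite summxE mulr_sumr; apply: le_trans (ler_norm_sum _ _ _) _.
apply: ler_sum => k _; rewrite mxE normrM.
apply: le_trans (ler_pM (normr_ge0 _) (normr_ge0 _) (c_bound k) (M_bound k i j)) _.
by rewrite [X in _ <= X]mulrC [(eta * _) ^+ _]exprMn mulrAC.
Qed.

End AnnihilatedPowers.

Section SpectralRadius.
Variable F : realType.
Local Notation toC := (fun x : F => x%:C%C).

Lemma normc_ge0 (z : F[i]) : 0 <= Normc.normc z.
Proof. by case: z => a b; apply: sqrtr_ge0. Qed.

Lemma normcE (z : F[i]) : `|z| = (Normc.normc z)%:C%C.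
Proof. by case: z => a b; rewrite normc_def. Qed.

Lemma normc_real (x : F) : `|x%:C%C| = `|x|%:C%C.
Proof. by rewrite normc_def /= expr0n /= addr0 sqrtr_sqr. Qed.

(* By Cayley-Hamilton, the complexified matrix is annihilated by the product
   of [L - z] over its eigenvalues [z], all of modulus at most [rho]. *)
Lemma spectral_radius_annihilator n (L : 'M[F]_n) (rho : F) :
  spectral_radius L <= rho ->
  exists s : seq F[i], [/\ size s = n,
    \prod_(z <- s) (map_mx toC L - z%:M) = 0 & forall z, z \in s -> `|z| <= rho%:C%C].
Proof.
case: n L => [|n] L L_rho; first by exists [::]; split=> //; apply: flatmx0.
set Lc := map_mx toC L.
have [s char_s] := closed_field_poly_normal (char_poly Lc).
rewrite (monicP (char_poly_monic _)) scale1r in char_s.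
have eigen_s z : eigenvalue Lc z = (z \in s).
  by rewrite eigenvalue_root_char char_s root_prod_XsubC.
exists s; split.
- by have := size_char_poly Lc; rewrite char_s size_prod_XsubC => -[].
- have := Cayley_Hamilton Lc; rewrite char_s rmorph_prod => <-.
  by apply: eq_bigr => z _; rewrite rmorphB /= horner_mx_X horner_mx_C.
have bounded : has_ubound [set Normc.normc l | l in [set l | eigenvalue Lc l]].
  exists (\sum_(z <- s) Normc.normc z) => _ [l /= /[!eigen_s] ls <-].
  rewrite (big_rem l ls) /= lerDl.
  by apply: sumr_ge0 => z _; apply: normc_ge0.
move=> z zs; rewrite normcE lecR; apply: le_trans L_rho.
by apply: (ub_le_sup bounded); exists z; rewrite //= eigen_s.
Qed.

Lemma spectral_pow_bound n (L : 'M[F]_n) (rho r a : F) :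
  0 <= rho -> rho < r -> 0 <= a -> mxbound L a -> spectral_radius L <= rho ->
  forall m, mxbound (L ^+ m)
    (r ^+ m * \sum_(k < n.+1) ((r - rho)^-1 * (n%:R * (a + rho))) ^+ k).
Proof.
move=> rho_ge0 rho_r a_ge0 L_a /spectral_radius_annihilator [s [size_s prod_s s_rho]].
move=> m i j.
have Lc_a : mxbound (map_mx toC L) a%:C%C by move=> i' j'; rewrite mxE normc_real lecR.
have := annihilated_pow_bound (r := r%:C%C) size_s prod_s s_rho _ _ _ Lc_a m i j.
rewrite ler0c ltcR ler0c => /(_ rho_ge0 rho_r a_ge0).
have -> : map_mx toC L ^+ m = map_mx toC (L ^+ m).
  elim: m {Lc_a} => [|m IH]; first by rewrite !expr0 map_mx1.
  by rewrite !exprS -!mulmxE IH map_mxM.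
rewrite mxE normc_real.
suff -> : (r%:C)%C ^+ m * \sum_(k < n.+1)
    (((r%:C)%C - (rho%:C)%C)^-1 * (n%:R * ((a%:C)%C + (rho%:C)%C))) ^+ k
    = ((r ^+ m * \sum_(k < n.+1) ((r - rho)^-1 * (n%:R * (a + rho))) ^+ k)%:C)%C.
  by rewrite lecR.
rewrite rmorphM rmorphXn rmorph_sum; congr (_ * _); apply: eq_bigr => k _.
by rewrite !(rmorphXn, rmorphM, rmorphD, rmorphN, fmorphV, rmorph_nat).
Qed.

End SpectralRadius.

Lemma lyap_unfold (R : comPzRingType) n (L X E : 'M[R]_n) :
  X = L^T *m X *m L + E ->
  forall m, X = (L ^+ m)^T *m X *m L ^+ m + \sum_(j < m) (L ^+ j)^T *m E *m L ^+ j.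
Proof.
move=> X_eq; elim=> [|m IH]; first by rewrite big_ord0 addr0 expr0 trmx1 mul1mx mulmx1.
have LmX : (L ^+ m)^T *m (L^T *m X *m L) *m L ^+ m = (L ^+ m.+1)^T *m X *m L ^+ m.+1.
  by rewrite exprS -mulmxE trmx_mul !mulmxA.
rewrite {1}IH {1}X_eq mulmxDr mulmxDl LmX big_ord_recr /= -!addrA.
by rewrite [_ + (_ *m E *m _)]addrC.
Qed.

Section Geometric.
Variable R : archiRealFieldType.
Implicit Types q C eps : R.

Lemma geometric_sum_le q m : 0 <= q -> q < 1 -> \sum_(i < m) q ^+ i <= (1 - q)^-1.
Proof.
move=> q0 q1; have q1' : 0 < 1 - q by rewrite subr_gt0.
have sumE : (1 - q) * \sum_(i < m) q ^+ i = 1 - q ^+ m.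
  by rewrite -opprB mulNr -subrX1 opprB.
by rewrite -(ler_pM2l q1') mulfV ?gt_eqF // sumE lerBlDr lerDl exprn_ge0.
Qed.

Lemma exists_pow_small q C eps : 0 <= q -> q < 1 -> 0 <= C -> 0 < eps ->
  exists m, C * q ^+ m <= eps.
Proof.
move=> q0 q1 C0 eps0; have q1' : 0 < 1 - q by rewrite subr_gt0.
set m := Num.Def.archi_bound (C / ((1 - q) * eps)); exists m.
(* [m q^m] is dominated by the geometric sum [q^0 + ... + q^(m-1)]. *)
have mqm : (1 - q) * (m%:R * q ^+ m) <= 1.
  rewrite -[X in _ <= X](mulfV (lt0r_neq0 q1')) ler_pM2l // mulr_natl.
  apply: le_trans (geometric_sum_le m q0 q1).
  rewrite -[X in _ *+ X]card_ord -sumr_const; apply: ler_sum => i _.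
  by apply: (ler_wiXn2l q0 (ltW q1)); apply: ltnW.
have Cm : C < (1 - q) * eps * m%:R.
  have := archi_boundP (divr_ge0 C0 (mulr_ge0 (ltW q1') (ltW eps0))).
  by rewrite ltr_pdivrMr ?mulr_gt0 // mulrC.
have qm0 : 0 <= q ^+ m := exprn_ge0 m q0.
nra.
Qed.

End Geometric.

Lemma lyap_mxbound (F : realType) n (L X E : 'M[F]_n) (r G e : F) :
  0 <= r -> r < 1 -> 0 <= G -> 0 <= e ->
  (forall m, mxbound (L ^+ m) (r ^+ m * G)) -> mxbound E e ->
  X = L^T *m X *m L + E -> mxbound X (n%:R ^+ 2 * G ^+ 2 / (1 - r ^+ 2) * e).
Proof.
move=> r0 r1 G0 e0 L_bound E_bound X_eq i j.
have r2_ge0 : 0 <= r ^+ 2 := exprn_ge0 2 r0.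
have r2_lt1 : r ^+ 2 < 1 by rewrite expr_lt1.
have coef_ge0 y : 0 <= y -> 0 <= n%:R ^+ 2 * G ^+ 2 * y.
  by move=> y0; rewrite !mulr_ge0 ?exprn_ge0 ?ler0n.
have conj_bound m (Y : 'M[F]_n) y : mxbound Y y ->
    mxbound ((L ^+ m)^T *m Y *m L ^+ m) (n%:R ^+ 2 * G ^+ 2 * y * (r ^+ 2) ^+ m).
  move=> Y_bound; rewrite -exprM mulnC exprM.
  have -> : n%:R ^+ 2 * G ^+ 2 * y * (r ^+ m) ^+ 2
      = n%:R * (n%:R * (r ^+ m * G * y) * (r ^+ m * G)) by ring.
  exact: mxboundM (mxboundM (mxboundT (L_bound m)) Y_bound) (L_bound m).
apply/ler_addgt0Pr => eps eps0.
have [m small] := exists_pow_small r2_ge0 r2_lt1 (coef_ge0 _ (frob_ge0 X)) eps0.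
rewrite (lyap_unfold X_eq m) mxE summxE addrC; apply: le_trans (ler_normD _ _) _.
apply: lerD; last exact: le_trans (conj_bound m X _ (mxbound_frob X) i j) small.
apply: le_trans (ler_norm_sum _ _ _) _.
apply: le_trans (_ : _ <= \sum_(l < m) n%:R ^+ 2 * G ^+ 2 * e * (r ^+ 2) ^+ l) _.
  by apply: ler_sum => l _; apply: conj_bound.
rewrite -mulr_sumr [X in _ <= X]mulrAC.
by apply: ler_wpM2l; [apply: coef_ge0 | apply: geometric_sum_le].
Qed.

Lemma quad_formB (R : comPzRingType) m n (M : 'M[R]_m) (X Y : 'M[R]_(m, n)) :
  X^T *m M *m X - Y^T *m M *m Y = (X - Y)^T *m M *m X + Y^T *m M *m (X - Y).
Proof. by rewrite linearB /= !mulmxBl mulmxBr addrA subrK. Qed.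

Lemma lyap_eq_sub (R : comPzRingType) n k (Q P P' L L' : 'M[R]_n) (Rm : 'M[R]_k)
    (K K' : 'M[R]_(k, n)) :
  P = Q + K^T *m Rm *m K + L^T *m P *m L ->
  P' = Q + K'^T *m Rm *m K' + L'^T *m P' *m L' ->
  P - P' = L^T *m (P - P') *m L + ((K - K')^T *m Rm *m K + K'^T *m Rm *m (K - K')
             + ((L - L')^T *m P' *m L + L'^T *m P' *m (L - L'))).
Proof.
move=> {1}-> {1}->; rewrite -!quad_formB mulmxBr mulmxBl.
set u := K^T *m _ *m K; set u' := K'^T *m _ *m K'; set c := L^T *m P' *m L.
rewrite opprD addrACA opprD (addrACA Q u) subrr add0r.
by rewrite [RHS]addrCA (addrA (_ - c)) subrK.
Qed.

Lemma thetaE (F : realType) d k (A : 'M[F]_d) (B : 'M[F]_(d, k)) Q Rm P :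
  theta A B Q Rm P = block_mx Q 0 0 Rm + (row_mx A B)^T *m P *m row_mx A B.
Proof.
rewrite /theta tr_row_mx mul_col_mx !mul_mx_row !mul_col_mx -block_mxEh add_block_mx.
by rewrite !add0r.
Qed.

Lemma theta_sub (F : realType) d k (A : 'M[F]_d) (B : 'M[F]_(d, k)) Q Rm P P' :
  theta A B Q Rm P - theta A B Q Rm P' = (row_mx A B)^T *m (P - P') *m row_mx A B.
Proof. by rewrite !thetaE opprD addrACA subrr add0r mulmxBr mulmxBl. Qed.

Section ThetaLipschitz.
Variables (F : realType) (d k : nat) (A : 'M[F]_d) (B : 'M[F]_(d, k)).
Variables (Q : 'M[F]_d) (Rm : 'M[F]_k) (rho cA cK : F).
Hypotheses (rho_ge0 : 0 <= rho) (rho_lt1 : rho < 1).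
Hypotheses (cA_ge0 : 0 <= cA) (cK_ge0 : 0 <= cK).

Definition admissible_gain (K : 'M[F]_(k, d)) :=
  [/\ opnorm K <= cK, opnorm (A - B *m K) <= cA & spectral_radius (A - B *m K) <= rho].

Let r := (rho + 1) / 2.
Let G := \sum_(l < d.+1) ((r - rho)^-1 * (d%:R * (cA + rho))) ^+ l.
Let S := d%:R ^+ 2 * G ^+ 2 / (1 - r ^+ 2).
(* [cP] bounds the solutions [P] for admissible gains, and [cE] the forcing term
   of [lyap_eq_sub] per unit of [frob (K - K')]. *)
Let cP := S * (frob Q + k%:R * (k%:R * (cK * frob Rm) * cK)).
Let cE := 2 * k%:R ^+ 2 * frob Rm * cK + 2 * d%:R ^+ 2 * k%:R * frob B * cA * cP.

Let rho_lt_r : rho < r. Proof. exact: (midf_lt rho_lt1).1. Qed.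
Let r_lt1 : r < 1. Proof. exact: (midf_lt rho_lt1).2. Qed.
Let r_ge0 : 0 <= r. Proof. exact: le_trans rho_ge0 (ltW rho_lt_r). Qed.

Let G_ge0 : 0 <= G.
Proof.
apply: sumr_ge0 => l _; apply: exprn_ge0.
apply: mulr_ge0; first by rewrite invr_ge0 subr_ge0 ltW.
by rewrite mulr_ge0 ?ler0n ?addr_ge0.
Qed.

Let S_ge0 : 0 <= S.
Proof.
apply: mulr_ge0; last by rewrite invr_ge0 subr_ge0 expr_le1 // ltW.
by rewrite mulr_ge0 ?exprn_ge0 ?ler0n.
Qed.

Let cP_ge0 : 0 <= cP.
Proof.
by rewrite /cP; do ![done | apply: mulr_ge0 | apply: addr_ge0]; rewrite ?frob_ge0 ?ler0n.
Qed.

Let cE_ge0 : 0 <= cE.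
Proof.
rewrite /cE; do ![done | apply: mulr_ge0 | apply: addr_ge0];
  by rewrite ?frob_ge0 ?exprn_ge0 ?ler0n.
Qed.

Let gain_bound (K : 'M[F]_(k, d)) : opnorm K <= cK -> mxbound K cK.
Proof. by move=> K_cK i j; apply: le_trans (mxbound_opnorm K i j) K_cK. Qed.

Lemma admissible_lyap_bound K (X E : 'M[F]_d) e :
  admissible_gain K -> 0 <= e -> mxbound E e ->
  X = (A - B *m K)^T *m X *m (A - B *m K) + E -> mxbound X (S * e).
Proof.
case=> _ L_cA L_rho e_ge0; apply: lyap_mxbound => //.
apply: spectral_pow_bound => // i j.
exact: le_trans (mxbound_opnorm _ i j) L_cA.
Qed.

Lemma lyap_sol_bound K P :
  admissible_gain K -> lyap_sol A B Q Rm K P -> mxbound P cP.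
Proof.
move=> K_adm P_eq; have [K_cK _ _] := K_adm.
apply: (admissible_lyap_bound (E := Q + K^T *m Rm *m K) K_adm); last by rewrite addrC.
  by do ![done | apply: mulr_ge0 | apply: addr_ge0]; rewrite ?frob_ge0 ?ler0n.
apply: mxboundD (mxbound_frob Q) _.
have K_bound := gain_bound K_cK.
exact: mxboundM (mxboundM (mxboundT K_bound) (mxbound_frob Rm)) K_bound.
Qed.

Lemma lyap_sol_sub_bound K K' P P' :
  admissible_gain K -> admissible_gain K' ->
  lyap_sol A B Q Rm K P -> lyap_sol A B Q Rm K' P' ->
  mxbound (P - P') (S * (frob (K - K') * cE)).
Proof.
move=> K_adm K'_adm P_eq P'_eq; have P'_cP := lyap_sol_bound K'_adm P'_eq.
have [[K_cK L_cA _] [K'_cK L'_cA _]] := (K_adm, K'_adm).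
set L := A - B *m K; set L' := A - B *m K'; set delta := frob (K - K').
have dK := mxbound_frob (K - K').
have [L_bound L'_bound] : mxbound L cA /\ mxbound L' cA.
  by split=> i j; apply: le_trans (mxbound_opnorm _ i j) _.
have dL : mxbound (L - L') (k%:R * (frob B * delta)).
  have -> : L - L' = - (B *m (K - K')).
    by rewrite /L /L' mulmxBr !opprB addrC addrA subrK.
  exact: mxboundN (mxboundM (mxbound_frob B) dK).
apply: admissible_lyap_bound K_adm _ _ (lyap_eq_sub P_eq P'_eq).
  by rewrite mulr_ge0 ?frob_ge0.
have -> : delta * cE =
    k%:R * (k%:R * (delta * frob Rm) * cK) + k%:R * (k%:R * (cK * frob Rm) * delta)
    + (d%:R * (d%:R * (k%:R * (frob B * delta) * cP) * cA)
       + d%:R * (d%:R * (cA * cP) * (k%:R * (frob B * delta)))) by rewrite /cE; ring.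
apply: mxboundD (mxboundD _ _) (mxboundD _ _).
- exact: mxboundM (mxboundM (mxboundT dK) (mxbound_frob Rm)) (gain_bound K_cK).
- exact: mxboundM (mxboundM (mxboundT (gain_bound K'_cK)) (mxbound_frob Rm)) dK.
- exact: mxboundM (mxboundM (mxboundT dL) P'_cP) L_bound.
- exact: mxboundM (mxboundM (mxboundT L'_bound) P'_cP) dL.
Qed.

Lemma theta_lipschitz : exists c, 0 <= c /\
  forall K K' P P', admissible_gain K -> admissible_gain K' ->
    lyap_sol A B Q Rm K P -> lyap_sol A B Q Rm K' P' ->
    frob (theta A B Q Rm P - theta A B Q Rm P') <= c * frob (K - K').
Proof.
set T := row_mx A B.
set c := ((d + k) * (d + k))%:R * (d%:R * (d%:R * (frob T * (S * cE)) * frob T)).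
have c_ge0 : 0 <= c by do ![done | apply: mulr_ge0]; rewrite ?ler0n ?frob_ge0.
exists c; split=> // K K' P P' K_adm K'_adm P_eq P'_eq; rewrite theta_sub -/T.
have dP := lyap_sol_sub_bound K_adm K'_adm P_eq P'_eq.
set delta := frob (K - K') in dP *.
have -> : c * delta
    = ((d + k) * (d + k))%:R * (d%:R * (d%:R * (frob T * (S * (delta * cE))) * frob T)).
  by rewrite /c; ring.
apply: frob_le_mxbound; first by do ![done | apply: mulr_ge0]; rewrite ?ler0n ?frob_ge0.
exact: mxboundM (mxboundM (mxboundT (mxbound_frob T)) dP) (mxbound_frob T).
Qed.

End ThetaLipschitz.

Unset Implicit Arguments. Set Strict Implicit.

Theorem lemma4 (F : realType) (d k : nat)
  (A : 'M[F]_d) (B : 'M[F]_(d, k)) (Q : 'M[F]_d) (Rm : 'M[F]_k)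
  (rho cA cK : F) :
  posdef Q -> posdef Rm ->
  0 < rho -> rho < 1 -> 0 < cA -> 0 < cK ->
  exists c1 : F, 0 < c1 /\
    forall (K K' : 'M[F]_(k, d)) (P P' : 'M[F]_d),
      opnorm K <= cK -> opnorm K' <= cK ->
      opnorm (A - B *m K) <= cA -> opnorm (A - B *m K') <= cA ->
      spectral_radius (A - B *m K) <= rho ->
      spectral_radius (A - B *m K') <= rho ->
      lyap_sol A B Q Rm K P -> lyap_sol A B Q Rm K' P' ->
      frob (theta A B Q Rm P - theta A B Q Rm P') <= c1 * frob (K - K').
Proof.
move=> _ _ rho_gt0 rho_lt1 cA_gt0 cK_gt0.
have [c [c_ge0 lipschitz]] :=
  theta_lipschitz A B Q Rm (ltW rho_gt0) rho_lt1 (ltW cA_gt0) (ltW cK_gt0).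
exists (c + 1); split; first by rewrite ltr_wpDl.
move=> K K' P P' K_cK K'_cK L_cA L'_cA L_rho L'_rho P_eq P'_eq.
have K_adm : admissible_gain A B rho cA cK K by split.
have K'_adm : admissible_gain A B rho cA cK K' by split.
apply: le_trans (lipschitz K K' P P' K_adm K'_adm P_eq P'_eq) _.
by rewrite ler_wpM2r ?frob_ge0 ?lerDl.
Qed.
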